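(* Assume the Standing Setting below. Let $n\in\mathbb Z$ and let $\zeta_1,\dots,\zeta_{m_n}$ be a finite frame for $\mathcal A_n$ with $\sum_{j=1}^{m_n}\phi(\zeta_j)\delta(\zeta_j^* )=0$. Then the associated Grassmann connection satisfies, for all $x\in\mathcal A_n$ and $\xi\in H_0$, $$\sum_{j=1}^{m_n}\phi(\zeta_j)\,\delta_0(\zeta_j^*x)\,\xi=\mu^{-n}\delta(x)\xi .$$
   Context: Standing Setting: $A$ is a unital $C^*$-algebra with a strongly continuous action $\sigma$ of $S^1$; $A_n:=\{a:\sigma_\lambda(a)=\lambda^na\ \forall\lambda\}$, $P_0(a):=\frac1{2\pi}\int_0^{2\pi}\sigma_{e^{it}}(a)dt$. $\mathcal A\subseteq A$ is a norm-dense unital $*$-subalgebra with $P_0(\mathcal A)\subseteq\mathcal A$, generated as a $*$-algebra by $\mathcal A\cap A_1$; $\mathcal A_n:=\mathcal A\cap A_n$. $H_0$ is a separable Hilbert space, $\rho:A_0\to\mathcal B(H_0)$ an injective unital $*$-homomorphism, $D_0$ a selfadjoint operator on $H_0$ such that for every $a\in\mathcal A_0$, $\rho(a)$ preserves $\operatorname{Dom}(D_0)$ and $[D_0,\rho(a)]$ extends to a bounded operator $\delta_0(a)$. $H$ is a separable Hilbert space containing $H_0$ as a closed subspace, $\phi:A\to\mathcal B(H)$ a unital $*$-homomorphism and $\delta:\mathcal A\to\mathcal B(H)$ linear with (1) $\delta(a)\xi=\delta_0(a)\xi$, $\phi(a)\xi=\rho(a)\xi$ for $a\in\mathcal A_0,\xi\in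 H_0$; (2) some $\mu>0$ with $\delta(ab)=\delta(a)\phi(b)+\mu^n\phi(a)\delta(b)$ for $a\in\mathcal A_n$, $b\in\mathcal A$; (3) $\zeta^R_1,\dots,\zeta^R_k,\zeta^L_1,\dots,\zeta^L_m\in\mathcal A_1$ with $\sum_j\zeta_j^R(\zeta_j^R)^*=1=\sum_j(\zeta_j^L)^*\zeta_j^L$ and $\sum_j\phi(\zeta^R_j)\delta((\zeta^R_j)^* )=0=\sum_j\phi(\zeta_j^L)^*\delta(\zeta_j^L)$. A finite frame for $\mathcal A_n$: $\zeta_1,\dots,\zeta_p\in\mathcal A_n$ with $\sum_j\zeta_j\zeta_j^*x=x$ for $x\in\mathcal A_n$. The Grassmann connection of the frame is $\nabla_{\mathrm{Gr}}(x)=\sum_j\zeta_j\otimes\delta_0(\zeta_j^*x)$; identifying $A_n\widehat\otimes_\rho H_0$ with a subspace of $H$ via $x\otimes\xi\mapsto\phi(x)\xi$, its evaluation at $\xi\in H_0$ is the vector $\sum_j\phi(\zeta_j)\delta_0(\zeta_j^*x)\xi$ displayed in the claim. *)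

From mathcomp Require Import all_boot all_order all_algebra.
Set Implicit Arguments. Unset Strict Implicit. Unset Printing Implicit Defensive.
Import Order.TTheory GRing.Theory Num.Theory.
Local Open Scope ring_scope.

Section Defs.
Variable K : numClosedFieldType.   (* the complex scalars *)

Definition star_algebra (A : algType K) (st : A -> A) : Prop :=
  [/\ forall a, st (st a) = a,
      forall a b, st (a + b) = st a + st b,
      forall (c : K) a, st (c *: a) = c^* *: st a,
      forall a b, st (a * b) = st b * st a
    & st 1 = 1].

Definition circle_action (A : algType K) (st : A -> A) (sigma : K -> A -> A) : Prop :=
  [/\ forall l, `|l| = 1 ->
        [/\ forall a b, sigma l (a + b) = sigma l a + sigma l b,
            forall (c : K) a, sigma l (c *: a) = c *: sigma l a,
            forall a b, sigma l (a * b) = sigma l a * sigma l b,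
            forall a, sigma l (st a) = st (sigma l a)
          & sigma l 1 = 1],
      forall l m, `|l| = 1 -> `|m| = 1 -> forall a, sigma (l * m) a = sigma l (sigma m a)
    & forall a, sigma 1 a = a].

Definition in_deg (A : algType K) (sigma : K -> A -> A) (n : int) (a : A) : Prop :=
  forall l : K, `|l| = 1 -> sigma l a = l ^ n *: a.

Definition star_subalgebra (A : algType K) (st : A -> A) (S : A -> Prop) : Prop :=
  [/\ S 1,
      forall a b, S a -> S b -> S (a + b),
      forall (c : K) a, S a -> S (c *: a),
      forall a b, S a -> S b -> S (a * b)
    & forall a, S a -> S (st a)].

Inductive star_gen (A : algType K) (st : A -> A) (S : A -> Prop) : A -> Prop :=
| sg_base a : S a -> star_gen st S a
| sg_one : star_gen st S 1
| sg_add a b : star_gen st S a -> star_gen st S b -> star_gen st S (a + b)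
| sg_scale (c : K) a : star_gen st S a -> star_gen st S (c *: a)
| sg_mul a b : star_gen st S a -> star_gen st S b -> star_gen st S (a * b)
| sg_star a : star_gen st S a -> star_gen st S (st a).

(* inner product (linear in the first variable) *)
Definition inner_product (H : lmodType K) (ip : H -> H -> K) : Prop :=
  [/\ forall (c : K) x y z, ip (c *: x + y) z = c * ip x z + ip y z,
      forall x y, ip y x = (ip x y)^*,
      forall x, 0 <= ip x x
    & forall x, ip x x = 0 -> x = 0].

Definition subspace (H : lmodType K) (S : H -> Prop) : Prop :=
  S 0 /\ forall (c : K) x y, S x -> S y -> S (c *: x + y).

Definition lin_op (H : lmodType K) (f : H -> H) : Prop :=
  forall (c : K) x y, f (c *: x + y) = c *: f x + f y.

Definition lin_op_on (H : lmodType K) (S : H -> Prop) (f : H -> H) : Prop :=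
  (forall x, S x -> S (f x)) /\
  forall (c : K) x y, S x -> S y -> f (c *: x + y) = c *: f x + f y.

Definition star_rep (A : algType K) (st : A -> A) (H : lmodType K)
  (ip : H -> H -> K) (phi : A -> H -> H) : Prop :=
  [/\ forall a, lin_op (phi a),
      forall x, phi 1 x = x,
      forall a b x, phi (a * b) x = phi a (phi b x),
      forall (c : K) a b x, phi (c *: a + b) x = c *: phi a x + phi b x
    & forall a x y, ip (phi a x) y = ip x (phi (st a) y)].

Record standing_setting (A : algType K) (st : A -> A) (sigma : K -> A -> A)
  (cA : A -> Prop) (H : lmodType K) (ip : H -> H -> K) (H0 : H -> Prop)
  (rho : A -> H -> H) (Dom : H -> Prop) (D0 : H -> H) (delta0 : A -> H -> H)
  (phi : A -> H -> H) (delta : A -> H -> H) (mu : K)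
  (kR mL : nat) (zR : 'I_kR -> A) (zL : 'I_mL -> A) : Prop := {
  ss_star : star_algebra st;
  ss_action : circle_action st sigma;
  ss_subalg : star_subalgebra st cA;
  ss_generated : forall a, cA a <-> star_gen st (fun b => cA b /\ in_deg sigma 1 b) a;
  ss_ip : inner_product ip;
  ss_H0 : subspace H0;
  ss_rho_lin : forall a, in_deg sigma 0 a -> lin_op_on H0 (rho a);
  ss_rho_one : forall x, H0 x -> rho 1 x = x;
  ss_rho_add : forall (c : K) a b x, in_deg sigma 0 a -> in_deg sigma 0 b -> H0 x ->
      rho (c *: a + b) x = c *: rho a x + rho b x;
  ss_rho_mul : forall a b x, in_deg sigma 0 a -> in_deg sigma 0 b -> H0 x ->
      rho (a * b) x = rho a (rho b x);
  ss_rho_star : forall a x y, in_deg sigma 0 a -> H0 x -> H0 y ->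
      ip (rho a x) y = ip x (rho (st a) y);
  ss_rho_inj : forall a b, in_deg sigma 0 a -> in_deg sigma 0 b ->
      (forall x, H0 x -> rho a x = rho b x) -> a = b;
  ss_Dom : subspace Dom /\ (forall x, Dom x -> H0 x);
  ss_D0_lin : forall (c : K) x y, Dom x -> Dom y ->
      D0 (c *: x + y) = c *: D0 x + D0 y;
  ss_D0_H0 : forall x, Dom x -> H0 (D0 x);
  ss_D0_sym : forall x y, Dom x -> Dom y -> ip (D0 x) y = ip x (D0 y);
  ss_D0_sa : forall y z, H0 y -> H0 z -> (forall x, Dom x -> ip (D0 x) y = ip x z) ->
      Dom y /\ D0 y = z;
  (* delta0(a) : bounded extension of [D0, rho(a)], a in cA_0 *)
  ss_rho_Dom : forall a x, cA a -> in_deg sigma 0 a -> Dom x -> Dom (rho a x);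
  ss_delta0_lin : forall a, cA a -> in_deg sigma 0 a -> lin_op_on H0 (delta0 a);
  ss_delta0_comm : forall a x, cA a -> in_deg sigma 0 a -> Dom x ->
      delta0 a x = D0 (rho a x) - rho a (D0 x);
  ss_phi : star_rep st ip phi;
  ss_delta_op : forall a, cA a -> lin_op (delta a);
  ss_delta_lin : forall (c : K) a b x, cA a -> cA b ->
      delta (c *: a + b) x = c *: delta a x + delta b x;
  ss_1_delta : forall a x, cA a -> in_deg sigma 0 a -> H0 x -> delta a x = delta0 a x;
  ss_1_phi : forall a x, cA a -> in_deg sigma 0 a -> H0 x -> phi a x = rho a x;
  ss_mu : 0 < mu;
  ss_leibniz : forall (n : int) a b x, cA a -> in_deg sigma n a -> cA b ->
      delta (a * b) x = delta a (phi b x) + mu ^ n *: phi a (delta b x);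
  ss_zR : forall j, cA (zR j) /\ in_deg sigma 1 (zR j);
  ss_zL : forall j, cA (zL j) /\ in_deg sigma 1 (zL j);
  ss_zR_sum : \sum_j zR j * st (zR j) = 1;
  ss_zL_sum : \sum_j st (zL j) * zL j = 1;
  ss_zR_delta : forall x, \sum_j phi (zR j) (delta (st (zR j)) x) = 0;
  ss_zL_delta : forall x, \sum_j phi (st (zL j)) (delta (zL j) x) = 0
}.

End Defs.

(** The frame projection [P = \sum_j zeta_j zeta_j^*] fixes [cA_n], and [cA_n]
    contains a family [w_i] with [\sum_i w_i w_i^* = 1] (products of the
    [zeta^R] if [n >= 0], of the [(zeta^L)^*] if [n < 0]), so
    [P = P \sum_i w_i w_i^* = 1].  As [zeta_j^* x] has degree 0, [delta0] and
    [delta] agree on it over [H0], and the twisted Leibniz rule in degree [-n]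
    splits [\sum_j phi(zeta_j) delta(zeta_j^* x)] into
    [\sum_j phi(zeta_j) delta(zeta_j^* ) phi(x)], which vanishes by hypothesis,
    plus [mu^(-n) phi(P) delta(x) = mu^(-n) delta(x)]. *)

From HB Require Import structures.
From mathcomp Require Import all_boot all_order all_algebra.
Import Order.TTheory GRing.Theory Num.Theory.
Local Open Scope ring_scope.

Set Implicit Arguments.
Unset Strict Implicit.
Unset Printing Implicit Defensive.

Lemma linear_fun_sum (R : pzRingType) (U V : lmodType R) (f : U -> V) (I : Type)
    (r : seq I) (P : pred I) (F : I -> U) :
  linear f -> f (\sum_(i <- r | P i) F i) = \sum_(i <- r | P i) f (F i).
Proof.
move=> lin_f.
pose g : {linear U -> V} := HB.pack f (GRing.isLinear.Build _ _ _ _ f lin_f).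
exact: (linear_sum g).
Qed.

Lemma eq1_of_fixed_partition_of_unity (R : pzRingType) (g : R -> R) (P : R)
    (s : seq R) :
  (forall w, w \in s -> P * w = w) -> \sum_(w <- s) w * g w = 1 -> P = 1.
Proof.
move=> Pw sum_s; rewrite -[P]mulr1 -sum_s big_distrr /=.
by apply: eq_big_seq => w /Pw Pw_w; rewrite mulrA Pw_w.
Qed.

Lemma unit_norm_neq0 (R : numDomainType) (l : R) : `|l| = 1 -> l != 0.
Proof. by move=> norm_l; rewrite -normr_eq0 norm_l oner_eq0. Qed.

Lemma conjC_unit_norm (K : numClosedFieldType) (l : K) : `|l| = 1 -> l^* = l^-1.
Proof. by move=> norm_l; rewrite invC_norm norm_l expr1n invr1 mul1r. Qed.

Section Grading.
Variables (K : numClosedFieldType) (A : algType K) (st : A -> A)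
  (sigma : K -> A -> A).
Hypotheses (st_alg : star_algebra st) (act : circle_action st sigma).

Lemma in_deg1 : in_deg sigma 0 1.
Proof.
have [sigma_hom _ _] := act.
by move=> l /sigma_hom [_ _ _ _ sigma1]; rewrite sigma1 expr0z scale1r.
Qed.

Lemma in_degM (n m : int) (a b : A) :
  in_deg sigma n a -> in_deg sigma m b -> in_deg sigma (n + m) (a * b).
Proof.
have [sigma_hom _ _] := act.
move=> deg_a deg_b l norm_l; have [_ _ sigmaM _ _] := sigma_hom l norm_l.
rewrite sigmaM deg_a // deg_b // -scalerAl -scalerAr scalerA.
by rewrite expfzDr ?unit_norm_neq0.
Qed.

Lemma in_deg_star (n : int) (a : A) :
  in_deg sigma n a -> in_deg sigma (- n) (st a).
Proof.
have [_ _ stZ _ _] := st_alg; have [sigma_hom _ _] := act.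
move=> deg_a l norm_l; have [_ _ _ sigma_st _] := sigma_hom l norm_l.
have l_unit : l \is a GRing.unit by rewrite unitfE unit_norm_neq0.
by rewrite sigma_st deg_a // stZ (rmorphXz _ _ l_unit) /= conjC_unit_norm ?exprz_inv.
Qed.

Variable cA : A -> Prop.
Hypothesis cA_subalg : star_subalgebra st cA.

Definition unital_frame (n : int) (s : seq A) : Prop :=
  (forall w, w \in s -> cA w /\ in_deg sigma n w) /\ \sum_(w <- s) w * st w = 1.

Lemma unital_frame1 : unital_frame 0 [:: 1].
Proof.
have [cA1 _ _ _ _] := cA_subalg; have [_ _ _ _ st1] := st_alg.
split; last by rewrite big_seq1 st1 mulr1.
by move=> w; rewrite inE => /eqP ->; split; [|exact: in_deg1].
Qed.

Lemma unital_frameM (n m : int) (s t : seq A) :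
  unital_frame n s -> unital_frame m t ->
  unital_frame (n + m) [seq u * v | u <- s, v <- t].
Proof.
have [_ _ _ cAM _] := cA_subalg; have [_ _ _ stM _] := st_alg.
move=> [s_deg s_sum] [t_deg t_sum]; split.
  move=> w /allpairsP [[u v] /= [/s_deg [cA_u deg_u] /t_deg [cA_v deg_v] ->]].
  by split; [exact: cAM | exact: in_degM].
rewrite big_allpairs_dep -[RHS]s_sum; apply: eq_bigr => u _ /=.
under eq_bigr do rewrite stM mulrA -[u * _ * _]mulrA.
by rewrite -big_distrl -big_distrr /= t_sum mulr1.
Qed.

Lemma unital_frameX (n : int) (s : seq A) (k : nat) :
  unital_frame n s -> exists t, unital_frame (n * k%:Z) t.
Proof.
move=> frame_s; elim: k => [|k [t frame_t]].
  by exists [:: 1]; rewrite mulr0; exact: unital_frame1.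
exists [seq u * v | u <- t, v <- s].
by rewrite intS mulrDr mulr1 addrC; exact: unital_frameM.
Qed.

End Grading.

Lemma exists_unital_frame (K : numClosedFieldType) (A : algType K) (st : A -> A)
  (sigma : K -> A -> A) (cA : A -> Prop) (H : lmodType K) (ip : H -> H -> K)
  (H0 : H -> Prop) (rho : A -> H -> H) (Dom : H -> Prop) (D0 : H -> H)
  (delta0 : A -> H -> H) (phi : A -> H -> H) (delta : A -> H -> H) (mu : K)
  (kR mL : nat) (zR : 'I_kR -> A) (zL : 'I_mL -> A) (n : int) :
  standing_setting st sigma cA ip H0 rho Dom D0 delta0 phi delta mu zR zL ->
  exists s, unital_frame st sigma cA n s.
Proof.
move=> S; have st_alg := ss_star S; have act := ss_action S.
have cA_subalg := ss_subalg S; have [stK _ _ _ _] := st_alg.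
have [_ _ _ _ cA_st] := cA_subalg.
have frameR : unital_frame st sigma cA 1 (map zR (enum 'I_kR)).
  split; last by rewrite big_map big_enum -(ss_zR_sum S); apply: eq_bigl.
  by move=> _ /mapP [j _ ->]; exact: (ss_zR S).
have frameL : unital_frame st sigma cA (-1) (map (st \o zL) (enum 'I_mL)).
  split=> [_ /mapP [j _ ->] | ].
    by have [cA_j deg_j] := ss_zL S j; split; [exact: cA_st | exact: in_deg_star].
  rewrite big_map big_enum -(ss_zL_sum S) /=.
  by apply: eq_big => // j _; rewrite stK.
case: n => k.
  by have [t] := unital_frameX st_alg act cA_subalg k frameR; rewrite mul1r; exists t.
have [t] := unital_frameX st_alg act cA_subalg k.+1 frameL.
by rewrite NegzE mulN1r; exists t.
Qed.

Theorem proposition7p7 (K : numClosedFieldType) (A : algType K) (st : A -> A)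
  (sigma : K -> A -> A) (cA : A -> Prop) (H : lmodType K) (ip : H -> H -> K)
  (H0 : H -> Prop) (rho : A -> H -> H) (Dom : H -> Prop) (D0 : H -> H)
  (delta0 : A -> H -> H) (phi : A -> H -> H) (delta : A -> H -> H) (mu : K)
  (kR mL : nat) (zR : 'I_kR -> A) (zL : 'I_mL -> A)
  (n : int) (m : nat) (zeta : 'I_m -> A) :
  standing_setting st sigma cA ip H0 rho Dom D0 delta0 phi delta mu zR zL ->
  (* finite frame for cA_n *)
  (forall j, cA (zeta j) /\ in_deg sigma n (zeta j)) ->
  (forall x, cA x -> in_deg sigma n x -> \sum_j zeta j * st (zeta j) * x = x) ->
  (forall xi, \sum_j phi (zeta j) (delta (st (zeta j)) xi) = 0) ->
  forall x xi, cA x -> in_deg sigma n x -> H0 xi ->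
    \sum_j phi (zeta j) (delta0 (st (zeta j) * x) xi) = mu ^ (- n) *: delta x xi.
Proof.
move=> S zeta_deg zeta_frame zeta_delta x xi cA_x deg_x H0_xi.
have [_ _ _ cAM cA_st] := ss_subalg S.
have [phi_lin phi1 phiM phi_linear _] := ss_phi S.
have frame_proj1 : \sum_j zeta j * st (zeta j) = 1.
  have [s [s_deg s_sum]] := exists_unital_frame n S.
  apply: eq1_of_fixed_partition_of_unity s_sum => w /s_deg [cA_w deg_w].
  by rewrite mulr_suml zeta_frame.
have leibniz j : phi (zeta j) (delta0 (st (zeta j) * x) xi) =
    phi (zeta j) (delta (st (zeta j)) (phi x xi))
    + mu ^ (- n) *: phi (zeta j * st (zeta j)) (delta x xi).
  have [cA_j deg_j] := zeta_deg j.
  have deg_st := in_deg_star (ss_star S) (ss_action S) deg_j.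
  have deg0 : in_deg sigma 0 (st (zeta j) * x).
    by rewrite -(addNr n); exact: (in_degM (ss_action S)).
  rewrite -(ss_1_delta S (cAM _ _ (cA_st _ cA_j) cA_x) deg0 H0_xi).
  by rewrite (ss_leibniz S _ (cA_st _ cA_j) deg_st cA_x) addrC phi_lin addrC phiM.
rewrite (eq_bigr _ (fun j _ => leibniz j)) big_split /= zeta_delta add0r.
have phi_linear_at v : linear (phi ^~ v) by move=> c a b; exact: phi_linear.
by rewrite -scaler_sumr -(linear_fun_sum _ _ _ (phi_linear_at _)) frame_proj1 phi1.
Qed.
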